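(* If $H=(S_0,e_0,S_1,e_1,\dots)$ is a history sequence of the Simpler Lazy Set algorithm, then the structure $M_H$ (with $\gamma$ as defined in the context) satisfies the Lazy Set axioms A0, A1, A2.
   Context: Simpler Lazy Set algorithm. Fix a countably infinite set $A$ of addresses with distinguished $\mathsf H,\mathsf T$; $\mathrm{Number}=\mathbb N\cup\{-1,\infty\}$. A state $S$: set $\mathrm{Active}^S\subseteq A$, $\mathrm{Next}^S:\mathrm{Active}^S\setminus\{\mathsf T\}\to A$, $\mathrm{Val}^S:\mathrm{Active}^S\to\mathrm{Number}$, and for each process $p$: $PC_p\in\{0,1,2,3.1,\dots,3.5\}$, $x_p\in\mathbb N$, $\mathrm{curr}_p\in A$, $\mathrm{status}_p$. $S$ is normal if $\mathrm{Active}^S$ is finite, $\mathsf H,\mathsf T$ are active with values $-1,\infty$, other active addresses have values in $\mathbb N$, and for active $a\neq\mathsf T$, $\mathrm{Next}(a)$ is active with $\mathrm{Val}(a)<\mathrm{Val}(\mathrm{Next}(a))$. The main branch is the path of $\mathrm{Next}$-links from $\mathsf H$ to $\mathsf T$. Initial state: $\mathrm{Active}=\{\mathsf H,\mathsf T\}$, $\mathrm{Next}(\mathsf H)=\mathsf T$, all $PC_p=0$. Steps $(S,e,T)$ of a process $p$ on a normal $S$: (i) invocation: $PC_p$ from $0$ to $1$, $2$ or $3.1$, with $x_p\in\mathbb N$ arbitrary; (ii) failure: $PC_p$ from $1$ or $2$ to $0$ with $\chi(e)=f$, nothing else changes; (iii) $\mathrm{AD}(x)$ ($x=x_p$, $PC_p$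 from $1$ to $0$): with $\mathfrak p$ the main-branch address having $\mathrm{Val}(\mathfrak p)<x\le\mathrm{Val}(\mathrm{Next}(\mathfrak p))$: if $\mathrm{Val}(\mathrm{Next}(\mathfrak p))=x$, no other change, $\chi(e)=1$, $\mathrm{adr}(e)=\mathrm{Next}^S(\mathfrak p)$; else a new address $a\notin\mathrm{Active}^S$ is made active with $\mathrm{Val}(a)=x$, $\mathrm{Next}^T(\mathfrak p)=a$, $\mathrm{Next}^T(a)=\mathrm{Next}^S(\mathfrak p)$, $\chi(e)=0$, $\mathrm{adr}(e)=a$; (iv) $\mathrm{RM}(x)$ ($PC_p$ from $2$ to $0$): if the main branch has an address $cu$ of value $x$, with $pred$ its main-branch predecessor, set $\mathrm{Next}^T(pred)=\mathrm{Next}^S(cu)$, $\chi(e)=1$, $\mathrm{adr}(e)=cu$; else no change, $\chi(e)=0$; (v) CONTAINS$(x)$ lines, each an atomic step: 3.1 $\mathrm{curr}_p:=\mathsf H$; 3.2/3.3 $\mathrm{curr}_p:=\mathrm{Next}(\mathrm{curr}_p)$; 3.4 if $\mathrm{Val}(\mathrm{curr}_p)\ge x$ go to 3.5 else to 3.3; 3.5 return $1$ if $\mathrm{Val}(\mathrm{curr}_p)=x$ else $0$, $PC_p:=0$. A history sequence is $(S_0,e_0,S_1,\dots)$ with $S_0$ initial and each $(S_i,e_i,S_{i+1})$ a step of some process. Every active address $a\notin\{\mathsf H,\mathsf T\}$ has a unique activating step $\mathrm{activation}(a)$: the $\mathrm{AD}$ action $e_i$ with $\chi(e_i)=0$ and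 $\mathrm{adr}(e_i)=a$. Structure $M_H$: its actions are the $e_i$, ordered by $e_i<e_j$ iff $i<j$; its high-level events are the CONTAINS$(x)$ operation executions $E$ (the set of actions of one process executing one CONTAINS protocol), with $\mathrm{Begin}(E)$ its first action (line 3.1) and $\mathrm{End}(E)$ its last (return) action; $\mathrm{Begin}(e)=\mathrm{End}(e)=e$ for actions; for events $X<Y$ iff $\mathrm{End}(X)<\mathrm{Begin}(Y)$. $\mathrm{Add}(e)$ iff $e$ is an $\mathrm{AD}$ action (including failures at line 1), $\mathrm{Rem}(e)$ iff $e$ is an $\mathrm{RM}$ action (including failures at line 2), $\mathrm{Cnt}(E)$ iff $E$ is a CONTAINS execution; $\mathrm{val}$ is the parameter $x$ and $\chi$ the returned status. $\gamma$: for an $\mathrm{AD}$ or $\mathrm{RM}$ action $e$ with $\chi(e)=1$, $\gamma(e)=\mathrm{activation}(\mathrm{adr}(e))$; for a CONTAINS execution $E$ with $\chi(E)=1$, whose variable $\mathrm{curr}$ takes final value $a_m$ (an active address of value $x$), $\gamma(E)=\mathrm{activation}(a_m)$. Notation: $\mathrm{Add}^p(a)$ abbreviates $\mathrm{Add}(a)\wedge\chi(a)=p$, similarly $\mathrm{Rem}^p,\mathrm{Cnt}^p$; $\mathrm{Op}^p(a)$ abbreviates $(\mathrm{Add}(a)\vee\mathrm{Rem}(a)\vee\mathrm{Cnt}(a))\wedge\chi(a)=p$, $p\in\{0,1\}$. A0: $\mathrm{Add},\mathrm{Rem},\mathrm{Cnt}$ pairwise disjoint; $\mathrm{Add},\mathrm{Rem}$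 events are actions, $\mathrm{Cnt}$ events high-level; $\mathrm{Begin}(X),\mathrm{End}(X)$ are actions; $\mathrm{Begin}(E)<\mathrm{End}(E)$ for $\mathrm{Cnt}$ events; $<$ is linear on actions. A1: for every $A$ with $\mathrm{Op}^1(A)$: $\mathrm{Add}^0(\gamma(A))$, $\mathrm{val}(\gamma(A))=\mathrm{val}(A)$, $\gamma(A)<\mathrm{End}(A)$, and no $R$ has $\mathrm{Rem}^1(R)$, $\gamma(R)=\gamma(A)$, $\gamma(A)<R<A$. A2: if $\mathrm{Op}^0(B)$, $\mathrm{Add}^0(A)$, $A<B$, $\mathrm{val}(A)=\mathrm{val}(B)$, then some $R$ has $\mathrm{Rem}^1(R)$, $A=\gamma(R)$, $R<\mathrm{End}(B)$. *)

From Stdlib Require Import Arith List ClassicalEpsilon.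

Inductive Num := NegOne | Fin (n : nat) | Inf.

Definition num_lt (a b : Num) : Prop :=
  match a, b with
  | NegOne, NegOne => False
  | NegOne, _ => True
  | Fin m, Fin n => m < n
  | Fin _, Inf => True
  | _, _ => False
  end.

Definition num_le (a b : Num) : Prop := num_lt a b \/ a = b.

Inductive PCv := PC0 | PC1 | PC2 | PC31 | PC32 | PC33 | PC34 | PC35.

(* returned status values: f (failure), 0, 1, or none (non-returning action) *)
Inductive Chi := ChiF | Chi0 | Chi1 | ChiNone.

(* kind of an action: invocation, AD (incl. failure at line 1),
   RM (incl. failure at line 2), CONTAINS lines 3.1 .. 3.5 *)
Inductive Kind := KInv | KAdd | KRem | K31 | K32 | K33 | K34 | K35.

Record State (A P : Type) := mkState {
  Active : A -> Prop;
  Next : A -> A;          (* meaningful on Active \ {T} *)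
  Val : A -> Num;         (* meaningful on Active *)
  PC : P -> PCv;
  xv : P -> nat;
  curr : P -> A;
  status : P -> Chi
}.
Arguments Active {A P}. Arguments Next {A P}. Arguments Val {A P}.
Arguments PC {A P}. Arguments xv {A P}. Arguments curr {A P}.
Arguments status {A P}.

Record Event (A P : Type) := mkEvent {
  ev_proc : P;
  ev_kind : Kind;
  ev_val : nat;
  ev_chi : Chi;
  ev_adr : A
}.
Arguments ev_proc {A P}. Arguments ev_kind {A P}. Arguments ev_val {A P}.
Arguments ev_chi {A P}. Arguments ev_adr {A P}.

Section Model.
Context {A P : Type} (H T : A).

Definition normal (S : State A P) : Prop :=
  (exists l : list A, forall a, Active S a <-> In a l) /\
  Active S H /\ Active S T /\ Val S H = NegOne /\ Val S T = Inf /\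
  (forall a, Active S a -> a <> H -> a <> T -> exists n, Val S a = Fin n) /\
  (forall a, Active S a -> a <> T ->
     Active S (Next S a) /\ num_lt (Val S a) (Val S (Next S a))).

Inductive main (S : State A P) : A -> Prop :=
  | main_H : main S H
  | main_next : forall a, main S a -> a <> T -> main S (Next S a).

Definition initial (S : State A P) : Prop :=
  (forall a, Active S a <-> a = H \/ a = T) /\
  Next S H = T /\ Val S H = NegOne /\ Val S T = Inf /\
  (forall p, PC S p = PC0).

Definition heap_same (S S' : State A P) : Prop :=
  (forall a, Active S' a <-> Active S a) /\
  (forall a, Active S a -> Val S' a = Val S a) /\
  (forall a, Active S a -> a <> T -> Next S' a = Next S a).

Definition others_same (p : P) (S S' : State A P) : Prop :=
  forall q, q <> p ->
    PC S' q = PC S q /\ xv S' q = xv S q /\ curr S' q = curr S q /\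
    status S' q = status S q.

Definition locals_same (p : P) (S S' : State A P) : Prop :=
  xv S' p = xv S p /\ curr S' p = curr S p.

Definition step_inv p S (e : Event A P) S' : Prop :=
  PC S p = PC0 /\ (PC S' p = PC1 \/ PC S' p = PC2 \/ PC S' p = PC31) /\
  heap_same S S' /\ curr S' p = curr S p /\
  ev_kind e = KInv /\ ev_val e = xv S' p /\ ev_chi e = ChiNone.

Definition step_fail p S (e : Event A P) S' : Prop :=
  ((PC S p = PC1 /\ ev_kind e = KAdd) \/ (PC S p = PC2 /\ ev_kind e = KRem)) /\
  PC S' p = PC0 /\ ev_chi e = ChiF /\ ev_val e = xv S p /\
  heap_same S S' /\ locals_same p S S'.

Definition step_AD p S (e : Event A P) S' : Prop :=
  let x := xv S p in
  PC S p = PC1 /\ PC S' p = PC0 /\ ev_kind e = KAdd /\ ev_val e = x /\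
  locals_same p S S' /\
  exists pp, main S pp /\ pp <> T /\
    num_lt (Val S pp) (Fin x) /\ num_le (Fin x) (Val S (Next S pp)) /\
    ( (Val S (Next S pp) = Fin x /\ heap_same S S' /\
       ev_chi e = Chi1 /\ ev_adr e = Next S pp)
    \/
      (Val S (Next S pp) <> Fin x /\
       exists a, ~ Active S a /\
         (forall b, Active S' b <-> Active S b \/ b = a) /\
         Val S' a = Fin x /\
         (forall b, Active S b -> Val S' b = Val S b) /\
         Next S' pp = a /\ Next S' a = Next S pp /\
         (forall b, Active S b -> b <> T -> b <> pp -> Next S' b = Next S b) /\
         ev_chi e = Chi0 /\ ev_adr e = a) ).

Definition step_RM p S (e : Event A P) S' : Prop :=
  let x := xv S p in
  PC S p = PC2 /\ PC S' p = PC0 /\ ev_kind e = KRem /\ ev_val e = x /\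
  locals_same p S S' /\
  ( (exists cu pred, main S cu /\ Val S cu = Fin x /\
       main S pred /\ pred <> T /\ Next S pred = cu /\
       (forall b, Active S' b <-> Active S b) /\
       (forall b, Active S b -> Val S' b = Val S b) /\
       Next S' pred = Next S cu /\
       (forall b, Active S b -> b <> T -> b <> pred -> Next S' b = Next S b) /\
       ev_chi e = Chi1 /\ ev_adr e = cu)
  \/
    ((~ exists cu, main S cu /\ Val S cu = Fin x) /\
     heap_same S S' /\ ev_chi e = Chi0) ).

(* CONTAINS(x): 3.1 curr:=H (goto 3.2); 3.2 curr:=Next(curr) (goto 3.4);
   3.3 curr:=Next(curr) (goto 3.4); 3.4 test; 3.5 return *)
Definition step_contains p S (e : Event A P) S' : Prop :=
  heap_same S S' /\ xv S' p = xv S p /\ ev_val e = xv S p /\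
  ( (PC S p = PC31 /\ PC S' p = PC32 /\ curr S' p = H /\
     ev_kind e = K31 /\ ev_chi e = ChiNone)
  \/ (PC S p = PC32 /\ PC S' p = PC34 /\ curr S' p = Next S (curr S p) /\
     ev_kind e = K32 /\ ev_chi e = ChiNone)
  \/ (PC S p = PC33 /\ PC S' p = PC34 /\ curr S' p = Next S (curr S p) /\
     ev_kind e = K33 /\ ev_chi e = ChiNone)
  \/ (PC S p = PC34 /\ curr S' p = curr S p /\
     ((num_le (Fin (xv S p)) (Val S (curr S p)) /\ PC S' p = PC35) \/
      (num_lt (Val S (curr S p)) (Fin (xv S p)) /\ PC S' p = PC33)) /\
     ev_kind e = K34 /\ ev_chi e = ChiNone)
  \/ (PC S p = PC35 /\ PC S' p = PC0 /\ curr S' p = curr S p /\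
     ev_kind e = K35 /\ ev_adr e = curr S p /\
     ((Val S (curr S p) = Fin (xv S p) /\ ev_chi e = Chi1) \/
      (Val S (curr S p) <> Fin (xv S p) /\ ev_chi e = Chi0))) ).

Definition step (p : P) (S : State A P) (e : Event A P) (S' : State A P) : Prop :=
  normal S /\ ev_proc e = p /\ others_same p S S' /\
  (step_inv p S e S' \/ step_fail p S e S' \/ step_AD p S e S' \/
   step_RM p S e S' \/ step_contains p S e S').

(* a history sequence (S_0, e_0, S_1, e_1, ...): of finite length
   N = Some n (actions e_0..e_{n-1}) or infinite (N = None) *)
Definition valid (N : option nat) (i : nat) : Prop :=
  match N with None => True | Some n => i < n end.

Definition history (N : option nat) (S : nat -> State A P) (e : nat -> Event A P)
  : Prop :=
  initial (S 0) /\
  forall i, valid N i -> exists p, step p (S i) (e i) (S (i + 1)).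

End Model.

(* events of M_H: actions e_i, and CONTAINS executions given by the index b
   of their 3.1 action and c of their return (3.5) action *)
Inductive MEv := MAct (i : nat) | MCnt (b c : nat).

Section Structure.
Context {A P : Type} (N : option nat) (e : nat -> Event A P).

Definition cnt_exec (b c : nat) : Prop :=
  valid N c /\ b < c /\ ev_kind (e b) = K31 /\ ev_kind (e c) = K35 /\
  ev_proc (e c) = ev_proc (e b) /\
  (forall k, b < k < c -> ev_proc (e k) = ev_proc (e b) -> ev_kind (e k) <> K35).

Definition is_ev (X : MEv) : Prop :=
  match X with MAct i => valid N i | MCnt b c => cnt_exec b c end.

Definition is_action (X : MEv) : Prop :=
  match X with MAct _ => True | MCnt _ _ => False end.

Definition Begin (X : MEv) : nat := match X with MAct i => i | MCnt b _ => b end.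
Definition End (X : MEv) : nat := match X with MAct i => i | MCnt _ c => c end.

Definition mlt (X Y : MEv) : Prop := End X < Begin Y.

Definition isAdd (X : MEv) : Prop :=
  match X with MAct i => ev_kind (e i) = KAdd | MCnt _ _ => False end.
Definition isRem (X : MEv) : Prop :=
  match X with MAct i => ev_kind (e i) = KRem | MCnt _ _ => False end.
Definition isCnt (X : MEv) : Prop :=
  match X with MAct _ => False | MCnt _ _ => True end.

Definition mval (X : MEv) : nat :=
  match X with MAct i => ev_val (e i) | MCnt _ c => ev_val (e c) end.
Definition mchi (X : MEv) : Chi :=
  match X with MAct i => ev_chi (e i) | MCnt _ c => ev_chi (e c) end.
(* adr of an action; for a CONTAINS execution, the final value of curr *)
Definition madr (X : MEv) : A :=
  match X with MAct i => ev_adr (e i) | MCnt _ c => ev_adr (e c) end.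

Definition is_activation (a : A) (i : nat) : Prop :=
  valid N i /\ ev_kind (e i) = KAdd /\ ev_chi (e i) = Chi0 /\ ev_adr (e i) = a.

Definition activation (a : A) : nat := epsilon (inhabits 0) (is_activation a).

Definition gamma (X : MEv) : nat := activation (madr X).

Definition Op (p : Chi) (X : MEv) : Prop :=
  (isAdd X \/ isRem X \/ isCnt X) /\ mchi X = p.

Definition axiom_A0 : Prop :=
  (forall X, is_ev X ->
     ~ (isAdd X /\ isRem X) /\ ~ (isAdd X /\ isCnt X) /\ ~ (isRem X /\ isCnt X)) /\
  (forall X, is_ev X -> isAdd X \/ isRem X -> is_action X) /\
  (forall X, is_ev X -> isCnt X -> ~ is_action X) /\
  (forall X, is_ev X -> is_ev (MAct (Begin X)) /\ is_ev (MAct (End X))) /\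
  (forall X, is_ev X -> isCnt X -> mlt (MAct (Begin X)) (MAct (End X))) /\
  (forall i j, is_ev (MAct i) -> is_ev (MAct j) ->
     mlt (MAct i) (MAct j) \/ MAct i = MAct j \/ mlt (MAct j) (MAct i)).

Definition axiom_A1 : Prop :=
  forall X, is_ev X -> Op Chi1 X ->
    let G := MAct (gamma X) in
    is_ev G /\ isAdd G /\ mchi G = Chi0 /\ mval G = mval X /\
    mlt G (MAct (End X)) /\
    ~ (exists R, is_ev R /\ isRem R /\ mchi R = Chi1 /\
         MAct (gamma R) = G /\ mlt G R /\ mlt R X).

Definition axiom_A2 : Prop :=
  forall B X, is_ev B -> is_ev X -> Op Chi0 B -> isAdd X -> mchi X = Chi0 ->
    mlt X B -> mval X = mval B ->
    exists R, is_ev R /\ isRem R /\ mchi R = Chi1 /\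
      X = MAct (gamma R) /\ mlt R (MAct (End B)).

End Structure.

From Stdlib Require Import PeanoNat ClassicalEpsilon Classical Lia.

(* Three invariants of a history carry the argument.  An address becomes active only at its
   activation (an AD action with status 0) and keeps its value from then on; it leaves the
   main branch only through an RM action with status 1 returning it, and an active address
   off the main branch never rejoins it.  Every successful operation finds its address on
   the main branch at some moment of its execution, which gives A1.  For A2, if nothing
   removes the address [a] added with value x before B, then [a] stays on the main branch
   throughout B; an AD or RM with status 0 would have found it, and a CONTAINS traversal
   cannot step past it: each Next-link the traversal follows was a link of the sorted main
   branch at some moment after it began, so it stops at an address of value exactly x. *)

Lemma num_lt_trans a b c : num_lt a b -> num_lt b c -> num_lt a c.
Proof. destruct a, b, c; simpl; intros; first [exact I | lia | tauto]. Qed.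

Lemma num_lt_irrefl a : ~ num_lt a a.
Proof. destruct a; simpl; lia || tauto. Qed.

Lemma num_lt_le_trans a b c : num_lt a b -> num_le b c -> num_lt a c.
Proof. intros hab [hbc | <-]; [exact (num_lt_trans a b c hab hbc) | exact hab]. Qed.

Lemma num_lt_nle a b : num_lt a b -> ~ num_le b a.
Proof. intros hab hba. exact (num_lt_irrefl a (num_lt_le_trans a b a hab hba)). Qed.

Lemma num_le_antisym a b : num_le a b -> num_le b a -> a = b.
Proof. intros [hab | ->] hba; [exfalso; exact (num_lt_nle a b hab hba) | reflexivity]. Qed.

Lemma num_nlt_Inf a : ~ num_lt Inf a.
Proof. destruct a; simpl; tauto. Qed.

Lemma num_nlt_NegOne a : ~ num_lt a NegOne.
Proof. destruct a; simpl; tauto. Qed.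

Section NormalState.
Context {A P : Type} (H T : A) (S : State A P).

Inductive reach : A -> A -> Prop :=
| reach_refl u : reach u u
| reach_step u w : u <> T -> reach (Next S u) w -> reach u w.

Lemma reach_snoc u v : reach u v -> v <> T -> reach u (Next S v).
Proof.
  induction 1; intros hv.
  - apply reach_step; [exact hv | apply reach_refl].
  - apply reach_step; auto.
Qed.

Lemma main_reach a : main H T S a -> reach H a.
Proof. induction 1; [apply reach_refl | apply reach_snoc; auto]. Qed.

Lemma main_total a u : main H T S a -> main H T S u -> reach u a \/ reach a u.
Proof.
  induction 1 as [|a ha IH haT]; intros hu.
  - right. apply main_reach; exact hu.
  - destruct (IH hu) as [R | R].
    + left. apply reach_snoc; auto.
    + inversion R; subst.
      * left. apply reach_snoc; [apply reach_refl | exact haT].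
      * right. assumption.
Qed.

Hypothesis HS : normal H T S.

Lemma normal_H : Active S H /\ Val S H = NegOne.
Proof. destruct HS as (_ & hH & _ & vH & _). auto. Qed.

Lemma normal_T : Active S T /\ Val S T = Inf.
Proof. destruct HS as (_ & _ & hT & _ & vT & _). auto. Qed.

Lemma normal_next a : Active S a -> a <> T ->
  Active S (Next S a) /\ num_lt (Val S a) (Val S (Next S a)).
Proof. destruct HS as (_ & _ & _ & _ & _ & _ & hN). auto. Qed.

Lemma Fin_neq_H_T a n : Val S a = Fin n -> a <> H /\ a <> T.
Proof.
  intros va. destruct normal_H as [_ vH], normal_T as [_ vT].
  split; intros ->; congruence.
Qed.

Lemma lt_Fin_neq_T a n : num_lt (Val S a) (Fin n) -> a <> T.
Proof. intros hlt ->. rewrite (proj2 normal_T) in hlt. exact (num_nlt_Inf _ hlt). Qed.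

Lemma Next_neq_H a : Active S a -> a <> T -> Next S a <> H.
Proof.
  intros ha haT E. destruct (normal_next a ha haT) as [_ hlt].
  rewrite E, (proj2 normal_H) in hlt. exact (num_nlt_NegOne _ hlt).
Qed.

Lemma main_active a : main H T S a -> Active S a.
Proof.
  induction 1; [exact (proj1 normal_H) | apply normal_next; assumption].
Qed.

Lemma reach_Val_le u w : Active S u -> reach u w ->
  Active S w /\ num_le (Val S u) (Val S w).
Proof.
  intros hu R. induction R as [u | u w huT R IH].
  - split; [exact hu | right; reflexivity].
  - destruct (normal_next u hu huT) as [hn hlt].
    destruct (IH hn) as [hw hle].
    split; [exact hw | left; exact (num_lt_le_trans _ _ _ hlt hle)].
Qed.

Lemma main_Next_le u a : main H T S u -> main H T S a -> u <> T ->
  num_lt (Val S u) (Val S a) -> num_le (Val S (Next S u)) (Val S a).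
Proof.
  intros hu ha huT hlt.
  destruct (main_total a u ha hu) as [R | R].
  - inversion R as [| u' w _ R' ]; subst.
    + exfalso. exact (num_lt_irrefl _ hlt).
    + apply (reach_Val_le _ _ (proj1 (normal_next u (main_active u hu) huT)) R').
  - exfalso. apply (num_lt_nle _ _ hlt).
    exact (proj2 (reach_Val_le a u (main_active a ha) R)).
Qed.

Lemma main_Next_inj v w : main H T S v -> main H T S w -> v <> T -> w <> T ->
  Next S v = Next S w -> v = w.
Proof.
  intros hv hw hvT hwT E.
  assert (oriented : forall x y, main H T S x -> main H T S y -> x <> T -> y <> T ->
            Next S x = Next S y -> reach x y -> x = y).
  { clear v w hv hw hvT hwT E. intros x y hx hy hxT hyT E R.
    inversion R as [| x' y' _ R']; subst; [reflexivity |].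
    exfalso.
    destruct (reach_Val_le _ _ (proj1 (normal_next x (main_active x hx) hxT)) R') as [_ hle].
    destruct (normal_next y (main_active y hy) hyT) as [_ hlt].
    rewrite <- E in hlt. exact (num_lt_nle _ _ hlt hle). }
  destruct (main_total w v hw hv) as [R | R].
  - apply oriented; auto.
  - symmetry. apply oriented; auto.
Qed.

End NormalState.

Section Steps.
Context {A P : Type} (H T : A).
Implicit Types (S : State A P) (e : Event A P) (p q : P).

Definition inserts (S S' : State A P) (pp a : A) : Prop :=
  main H T S pp /\ pp <> T /\ ~ Active S a /\
  (forall b, Active S' b <-> Active S b \/ b = a) /\
  (forall b, Active S b -> Val S' b = Val S b) /\
  Next S' pp = a /\ Next S' a = Next S pp /\
  (forall b, Active S b -> b <> T -> b <> pp -> Next S' b = Next S b).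

Definition unlinks (S S' : State A P) (pr cu : A) : Prop :=
  main H T S pr /\ pr <> T /\ Next S pr = cu /\
  (forall b, Active S' b <-> Active S b) /\
  (forall b, Active S b -> Val S' b = Val S b) /\
  Next S' pr = Next S cu /\
  (forall b, Active S b -> b <> T -> b <> pr -> Next S' b = Next S b).

Variant heap_step (S : State A P) (e : Event A P) (S' : State A P) : Prop :=
| heap_keep :
    heap_same T S S' -> ~ (ev_kind e = KAdd /\ ev_chi e = Chi0) ->
    ~ (ev_kind e = KRem /\ ev_chi e = Chi1) -> heap_step S e S'
| heap_insert pp :
    ev_kind e = KAdd -> ev_chi e = Chi0 -> inserts S S' pp (ev_adr e) ->
    Val S' (ev_adr e) = Fin (ev_val e) -> heap_step S e S'
| heap_unlink pr :
    ev_kind e = KRem -> ev_chi e = Chi1 -> unlinks S S' pr (ev_adr e) ->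
    Val S (ev_adr e) = Fin (ev_val e) -> heap_step S e S'.

Lemma heap_same_main S S' a : normal H T S -> heap_same T S S' ->
  main H T S a <-> main H T S' a.
Proof.
  intros HS (hA & _ & hN). split.
  - induction 1 as [| v hv IH hvT]; [apply main_H |].
    rewrite <- hN by (auto; exact (main_active H T S HS v hv)). apply main_next; auto.
  - induction 1 as [| v hv IH hvT]; [apply main_H |].
    rewrite hN by (auto; exact (main_active H T S HS v IH)). apply main_next; auto.
Qed.

Lemma insert_main S S' pp a : normal H T S -> inserts S S' pp a ->
  (forall v, main H T S v -> main H T S' v) /\
  (forall v, main H T S' v -> main H T S v \/ v = a).
Proof.
  intros HS (hpp & hppT & hna & _ & _ & hNpp & hNa & hN).
  assert (haT : a <> T) by (intros ->; exact (hna (proj1 (normal_T H T S HS)))).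
  split.
  - induction 1 as [| v hv IH hvT]; [apply main_H |].
    destruct (classic (v = pp)) as [-> | hvpp].
    + rewrite <- hNa. apply main_next; [rewrite <- hNpp; apply main_next |]; assumption.
    + rewrite <- hN by (auto; exact (main_active H T S HS v hv)). apply main_next; auto.
  - induction 1 as [| v hv IH hvT]; [left; apply main_H |].
    destruct IH as [hvS | ->].
    + destruct (classic (v = pp)) as [-> | hvpp]; [right; exact hNpp | left].
      rewrite hN by (auto; exact (main_active H T S HS v hvS)). apply main_next; auto.
    + left. rewrite hNa. apply main_next; assumption.
Qed.

Lemma unlink_main S S' pr cu : normal H T S -> unlinks S S' pr cu -> cu <> T ->
  (forall v, main H T S v -> v <> cu -> main H T S' v) /\
  (forall v, main H T S' v -> main H T S v /\ v <> cu).
Proof.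
  intros HS (hpr & hprT & hNpr & _ & _ & hN'pr & hN) hcuT.
  assert (hpra : Active S pr) by exact (main_active H T S HS pr hpr).
  assert (hcu : main H T S cu) by (rewrite <- hNpr; apply main_next; assumption).
  assert (hcuH : cu <> H) by (rewrite <- hNpr; exact (Next_neq_H H T S HS pr hpra hprT)).
  assert (hNcu : Next S cu <> cu).
  { intros E. destruct (normal_next H T S HS cu (main_active H T S HS cu hcu) hcuT) as [_ h].
    rewrite E in h. exact (num_lt_irrefl _ h). }
  split.
  - (* Strengthened: when the induction reaches [cu] in [S], the new branch must already
       contain [pr], whose link in [S'] bypasses [cu]. *)
    assert (forall v, main H T S v ->
              (v <> cu -> main H T S' v) /\ (v = cu -> main H T S' pr)) as key.
    { induction 1 as [| v hv IH hvT]; [split; [intros; apply main_H | congruence] |].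
      destruct IH as [IH1 IH2].
      assert (hpre : Next S v = cu -> v = pr)
        by (intros E; apply (main_Next_inj H T S HS); congruence).
      split; [intros hne | intros E; rewrite (hpre E) in *; apply IH1; congruence].
      destruct (classic (v = pr)) as [-> | hvpr]; [congruence |].
      destruct (classic (v = cu)) as [-> | hvcu].
      + rewrite <- hN'pr. apply main_next; [apply IH2 |]; auto.
      + rewrite <- hN by (auto; exact (main_active H T S HS v hv)).
        apply main_next; auto. }
    intros v hv hne. exact (proj1 (key v hv) hne).
  - induction 1 as [| v hv [IH1 IH2] hvT]; [split; [apply main_H | congruence] |].
    destruct (classic (v = pr)) as [-> | hvpr].
    + rewrite hN'pr. split; [apply main_next |]; assumption.
    + rewrite hN by (auto; exact (main_active H T S HS v IH1)).
      split; [apply main_next; assumption |].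
      intros E. apply hvpr, (main_Next_inj H T S HS); congruence.
Qed.

Section OneHeapStep.
Variables (S S' : State A P) (e : Event A P).
Hypothesis HS : normal H T S.
Hypothesis Hstep : heap_step S e S'.

Lemma heap_step_Active a : Active S a -> Active S' a /\ Val S' a = Val S a.
Proof.
  intros ha. destruct Hstep as [(hA & hV & _) _ _ | pp _ _ (_ & _ & _ & hA & hV & _) _
                               | pr _ _ (_ & _ & _ & hA & hV & _) _];
    split; try apply hA; auto.
Qed.

Lemma heap_step_Active_new a : Active S' a ->
  Active S a \/ (ev_kind e = KAdd /\ ev_chi e = Chi0 /\ ev_adr e = a).
Proof.
  intros ha. destruct Hstep as [(hA & _) _ _ | pp hk hc (_ & _ & _ & hA & _) _
                               | pr _ _ (_ & _ & _ & hA & _) _].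
  - left. apply hA, ha.
  - destruct (proj1 (hA a) ha) as [h | ->]; auto.
  - left. apply hA, ha.
Qed.

Lemma heap_step_main_keep v : main H T S v ->
  main H T S' v \/ (ev_kind e = KRem /\ ev_chi e = Chi1 /\ ev_adr e = v).
Proof.
  intros hv. destruct Hstep as [hs _ _ | pp _ _ hins _ | pr hk hc hunl hval].
  - left. apply (heap_same_main S S' v HS hs), hv.
  - left. exact (proj1 (insert_main S S' pp _ HS hins) v hv).
  - destruct (classic (v = ev_adr e)) as [-> | hne]; [right; auto | left].
    apply (unlink_main S S' pr _ HS hunl); auto.
    exact (proj2 (Fin_neq_H_T H T S HS _ _ hval)).
Qed.

Lemma heap_step_main_new v : main H T S' v -> main H T S v \/ ~ Active S v.
Proof.
  intros hv. destruct Hstep as [hs _ _ | pp _ _ hins _ | pr _ _ hunl hval].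
  - left. apply (heap_same_main S S' v HS hs), hv.
  - destruct (proj2 (insert_main S S' pp _ HS hins) v hv) as [h | ->]; [left; exact h |].
    right. exact (proj1 (proj2 (proj2 hins))).
  - left. apply (unlink_main S S' pr _ HS hunl); auto.
    exact (proj2 (Fin_neq_H_T H T S HS _ _ hval)).
Qed.

Lemma heap_step_Next u : Active S u -> u <> T -> main H T S' u \/ Next S' u = Next S u.
Proof.
  intros hu huT.
  destruct Hstep as [(_ & _ & hN) _ _ | pp _ _ hins _ | pr _ _ hunl hval].
  - right. auto.
  - destruct (classic (u = pp)) as [-> | hne].
    + left. apply (proj1 (insert_main S S' pp _ HS hins)), hins.
    + right. apply hins; auto.
  - destruct (classic (u = pr)) as [-> | hne].
    + left. pose proof hunl as (hpr & _ & hNpr & _).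
      apply (unlink_main S S' pr (ev_adr e) HS hunl);
        [exact (proj2 (Fin_neq_H_T H T S HS _ _ hval)) | exact hpr |].
      intros E. destruct (normal_next H T S HS pr hu huT) as [_ h].
      rewrite hNpr, <- E in h. exact (num_lt_irrefl _ h).
    + right. apply hunl; auto.
Qed.

Lemma heap_step_add0 : ev_kind e = KAdd -> ev_chi e = Chi0 ->
  ~ Active S (ev_adr e) /\ main H T S' (ev_adr e) /\ Val S' (ev_adr e) = Fin (ev_val e).
Proof.
  intros hk hc. destruct Hstep as [_ hn _ | pp _ _ hins hval | pr hk' _ _ _];
    [tauto | | congruence].
  pose proof hins as (hpp & hppT & hna & _ & _ & hNpp & _).
  split; [exact hna | split; [| exact hval]].
  rewrite <- hNpp. apply main_next; [apply (insert_main S S' pp _ HS hins) |]; assumption.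
Qed.

Lemma heap_step_rem1 : ev_kind e = KRem -> ev_chi e = Chi1 ->
  main H T S (ev_adr e) /\ ~ main H T S' (ev_adr e) /\ Val S (ev_adr e) = Fin (ev_val e).
Proof.
  intros hk hc. destruct Hstep as [_ _ hn | pp hk' _ _ _ | pr _ _ hunl hval];
    [tauto | congruence |].
  assert (hcuT : ev_adr e <> T) by exact (proj2 (Fin_neq_H_T H T S HS _ _ hval)).
  destruct (unlink_main S S' pr _ HS hunl hcuT) as [_ back].
  split; [| split; [intros h; exact (proj2 (back _ h) eq_refl) | exact hval]].
  destruct hunl as (hpr & hprT & hNpr & _).
  rewrite <- hNpr. apply main_next; assumption.
Qed.

End OneHeapStep.

Ltac destruct_step Hs :=
  destruct Hs as (_ & _ & _ & [Hi | [Hf | [Had | [Hrm | Hct]]]]);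
  [ destruct Hi as (_ & _ & Hhs & _ & Hk & Hv & Hc)
  | destruct Hf as (_ & _ & Hc & Hv & Hhs & _)
  | destruct Had as (_ & _ & Hk & Hv & _ & pp & Hpp & Hppt & Hlt & Hle &
      [(Heq & Hhs & Hc & Hadr) |
       (Hneq & adr & Hna & Hact & Hva & Hvals & Hnp & Hna0 & Hnb & Hc & Hadr)])
  | destruct Hrm as (_ & _ & Hk & Hv & _ &
      [(cu & pr & _ & Hvc & Hmp & Hpt & Hnp & Hact & Hvals & Hnx & Hnb & Hc & Hadr) |
       (Hno & Hhs & Hc)])
  | destruct Hct as (Hhs & _ & Hv & Hcases) ].

Lemma step_heap p S e S' : step H T p S e S' -> heap_step S e S'.
Proof.
  intros Hs. destruct_step Hs;
    try (apply heap_keep; [exact Hhs | intros [k c]; congruence | intros [k c]; congruence]).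
  - apply (heap_insert _ _ _ pp Hk Hc).
    + rewrite Hadr. unfold inserts. tauto.
    + rewrite Hadr, Hv. exact Hva.
  - apply (heap_unlink _ _ _ pr Hk Hc).
    + rewrite Hadr. unfold unlinks. tauto.
    + rewrite Hadr, Hv. exact Hvc.
  - apply heap_keep; [exact Hhs | |]; intros [k c]; decompose [and or] Hcases; congruence.
Qed.

Lemma step_add1 p S e S' : step H T p S e S' -> ev_kind e = KAdd -> ev_chi e = Chi1 ->
  main H T S (ev_adr e) /\ Val S (ev_adr e) = Fin (ev_val e).
Proof.
  intros Hs K C. destruct_step Hs; try congruence; [|decompose [and or] Hcases; congruence].
  rewrite Hadr, Hv. split; [apply main_next |]; assumption.
Qed.

Lemma step_miss p S e S' : step H T p S e S' ->
  ev_kind e = KAdd \/ ev_kind e = KRem -> ev_chi e = Chi0 ->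
  forall a, main H T S a -> Val S a <> Fin (ev_val e).
Proof.
  intros Hs K C a ha va. pose proof Hs as (HS & _).
  destruct_step Hs; try (destruct K; congruence);
    [| | destruct K; decompose [and or] Hcases; congruence].
  - rewrite Hv in va. apply Hneq, num_le_antisym; [| exact Hle].
    rewrite <- va. apply (main_Next_le H T S HS); auto. rewrite va. exact Hlt.
  - apply Hno. exists a. rewrite <- Hv. auto.
Qed.

Definition traversing (pc : PCv) : Prop :=
  pc = PC32 \/ pc = PC33 \/ pc = PC34 \/ pc = PC35.

Lemma step_contains_or_other p S e S' : step H T p S e S' ->
  step_contains H T p S e S' \/
  ((PC S p = PC0 \/ PC S p = PC1 \/ PC S p = PC2) /\
   (PC S' p = PC0 \/ PC S' p = PC1 \/ PC S' p = PC2 \/ PC S' p = PC31) /\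
   (ev_kind e = KInv \/ ev_kind e = KAdd \/ ev_kind e = KRem)).
Proof.
  intros (_ & _ & _ & [Hi | [Hf | [Had | [Hrm | Hct]]]]); [right .. | left; exact Hct].
  - destruct Hi as (h0 & h1 & _ & _ & hk & _). auto.
  - destruct Hf as ([[h0 hk] | [h0 hk]] & h1 & _); auto.
  - destruct Had as (h0 & h1 & hk & _). auto.
  - destruct Hrm as (h0 & h1 & hk & _). auto.
Qed.

Definition contains_inv S q : Prop :=
  (PC S q = PC32 -> curr S q = H) /\
  (PC S q = PC33 -> Active S (curr S q) /\ num_lt (Val S (curr S q)) (Fin (xv S q))) /\
  (PC S q = PC34 -> Active S (curr S q)) /\
  (PC S q = PC35 -> Active S (curr S q) /\ num_le (Fin (xv S q)) (Val S (curr S q))).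

Lemma contains_inv_curr_Active S q : normal H T S -> contains_inv S q ->
  traversing (PC S q) -> Active S (curr S q).
Proof.
  intros HS (I32 & I33 & I34 & I35) [h | [h | [h | h]]].
  - rewrite (I32 h). exact (proj1 (normal_H H T S HS)).
  - exact (proj1 (I33 h)).
  - exact (I34 h).
  - exact (proj1 (I35 h)).
Qed.

Lemma contains_inv_below S q : normal H T S -> contains_inv S q ->
  PC S q = PC32 \/ PC S q = PC33 ->
  Active S (curr S q) /\ num_lt (Val S (curr S q)) (Fin (xv S q)).
Proof.
  intros HS (I32 & I33 & _) [h | h]; [| exact (I33 h)].
  rewrite (I32 h), (proj2 (normal_H H T S HS)).
  split; [exact (proj1 (normal_H H T S HS)) | exact I].
Qed.

Lemma step_K31 p S e S' : step H T p S e S' -> ev_kind e = K31 ->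
  PC S' p = PC32 /\ curr S' p = H /\ xv S' p = xv S p.
Proof.
  intros Hs hk.
  destruct (step_contains_or_other p S e S' Hs) as [(_ & hxv & _ & C) | (_ & _ & hk')];
    [| decompose [or] hk'; congruence].
  destruct C as [(_ & h1 & hc & _) | C]; [auto | decompose [and or] C; congruence].
Qed.

Lemma step_K35 p S e S' : step H T p S e S' -> ev_kind e = K35 ->
  PC S p = PC35 /\ ev_adr e = curr S p /\ ev_val e = xv S p /\
  ((Val S (curr S p) = Fin (xv S p) /\ ev_chi e = Chi1) \/
   (Val S (curr S p) <> Fin (xv S p) /\ ev_chi e = Chi0)).
Proof.
  intros Hs hk.
  destruct (step_contains_or_other p S e S' Hs) as [(_ & _ & hv & C) | (_ & _ & hk')];
    [| decompose [or] hk'; congruence].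
  destruct C as [C | [C | [C | [C | (h0 & _ & _ & _ & hadr & hret)]]]];
    [decompose [and] C; congruence .. | auto].
Qed.

Lemma step_traverse p S e S' : step H T p S e S' -> traversing (PC S p) -> ev_kind e <> K35 ->
  traversing (PC S' p) /\ xv S' p = xv S p /\
  (curr S' p = curr S p \/
   (curr S' p = Next S (curr S p) /\ (PC S p = PC32 \/ PC S p = PC33))).
Proof.
  intros Hs hpc hk. unfold traversing in *.
  destruct (step_contains_or_other p S e S' Hs) as [(_ & hxv & _ & C) | (hpc' & _)];
    [| decompose [or] hpc; decompose [or] hpc'; congruence].
  destruct C as [(h0 & _) | [(h0 & h1 & hc & _) | [(h0 & h1 & hc & _) |
                 [(h0 & hc & [(_ & h1) | (_ & h1)] & _) | (_ & _ & _ & hk' & _)]]]];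
    [decompose [or] hpc; congruence | tauto .. | congruence].
Qed.

Lemma step_contains_inv p S e S' q : step H T p S e S' -> contains_inv S q -> contains_inv S' q.
Proof.
  intros Hs Inv. pose proof Hs as (HS & _ & Hoth & _).
  destruct (classic (q = p)) as [-> | hqp].
  - destruct (step_contains_or_other p S e S' Hs)
      as [((hA & hV & _) & hxv & _ & C) | (_ & hpc' & _)].
    2: (split; [| split; [| split]]); intros hpc; decompose [or] hpc'; congruence.
    pose proof Inv as (_ & _ & I34 & _).
    destruct C as [(h0 & h1 & hc & _) | [(h0 & h1 & hc & _) | [(h0 & h1 & hc & _) |
                   [(h0 & hc & [(hle & h1) | (hlt & h1)] & _) | (h0 & h1 & _)]]]];
      (split; [| split; [| split]]); intros hpc; try congruence; rewrite ?hc, ?hxv.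
    + destruct (contains_inv_below S p HS Inv (or_introl h0)) as [ha hlt].
      apply hA, (normal_next H T S HS _ ha), (lt_Fin_neq_T H T S HS _ _ hlt).
    + destruct (contains_inv_below S p HS Inv (or_intror h0)) as [ha hlt].
      apply hA, (normal_next H T S HS _ ha), (lt_Fin_neq_T H T S HS _ _ hlt).
    + split; [apply hA, (I34 h0) |]. rewrite hV by exact (I34 h0). exact hle.
    + split; [apply hA, (I34 h0) |]. rewrite hV by exact (I34 h0). exact hlt.
  - unfold contains_inv in *. destruct (Hoth q hqp) as (-> & -> & -> & _).
    pose proof (heap_step_Active S S' e (step_heap p S e S' Hs)) as persist.
    destruct Inv as (I32 & I33 & I34 & I35). split; [| split; [| split]]; intros hpc.
    + exact (I32 hpc).
    + destruct (I33 hpc) as [ha hlt]. destruct (persist _ ha) as [ha' ->]. auto.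
    + apply persist, (I34 hpc).
    + destruct (I35 hpc) as [ha hle]. destruct (persist _ ha) as [ha' ->]. auto.
Qed.

End Steps.

Section History.
Context {A P : Type} (H T : A) (N : option nat) (St : nat -> State A P) (e : nat -> Event A P).
Hypothesis Hh : history H T N St e.

Lemma valid_le k t : k <= t -> valid N t -> valid N k.
Proof. destruct N; simpl; lia. Qed.

(* The last state [St n] of a history of length [n] is reached, but need not be normal. *)
Definition reached t : Prop := forall k, k < t -> valid N k.

Lemma reached_S t : valid N t -> reached (S t).
Proof. intros vt k hk. apply (valid_le k t); [lia | exact vt]. Qed.

Lemma reached_of_valid t : valid N t -> reached t.
Proof. intros vt k hk. apply (valid_le k t); [lia | exact vt]. Qed.

Lemma reached_ind (Q : nat -> Prop) s : Q s ->
  (forall t, s <= t -> valid N t -> Q t -> Q (S t)) ->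
  forall t, s <= t -> reached t -> Q t.
Proof.
  intros hs hstep. induction t as [| t IH]; intros hst ht.
  - assert (s = 0) as -> by lia. exact hs.
  - destruct (Nat.eq_dec s (S t)) as [<- | hne]; [exact hs |].
    apply hstep; [lia | apply ht; lia |].
    apply IH; [lia | intros k hk; apply ht; lia].
Qed.

Lemma reached_ind0 (Q : nat -> Prop) : Q 0 ->
  (forall t, valid N t -> Q t -> Q (S t)) -> forall t, reached t -> Q t.
Proof.
  intros h0 hstep t. apply (reached_ind Q 0 h0); [intros; auto | lia].
Qed.

Lemma step_at t : valid N t -> exists p, step H T p (St t) (e t) (St (S t)).
Proof. intros vt. destruct Hh as [_ h]. rewrite <- Nat.add_1_r. exact (h t vt). Qed.

Lemma normal_at t : valid N t -> normal H T (St t).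
Proof. intros vt. destruct (step_at t vt) as [p (HS & _)]. exact HS. Qed.

Lemma heap_step_at t : valid N t -> heap_step H T (St t) (e t) (St (S t)).
Proof. intros vt. destruct (step_at t vt) as [p Hs]. exact (step_heap H T p _ _ _ Hs). Qed.

Lemma Active_persist s t a : s <= t -> reached t -> Active (St s) a ->
  Active (St t) a /\ Val (St t) a = Val (St s) a.
Proof.
  intros hst ht ha. revert t hst ht. apply reached_ind; [auto |].
  intros t _ vt [hat hv].
  destruct (heap_step_Active H T _ _ _ (heap_step_at t vt) a hat) as [h1 h2].
  split; [exact h1 | congruence].
Qed.

Lemma offmain_persist s t a : s <= t -> reached t -> Active (St s) a ->
  ~ main H T (St s) a -> ~ main H T (St t) a.
Proof.
  intros hst ht ha hm. revert t hst ht. apply reached_ind; [exact hm |].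
  intros t hst vt hmt hm'.
  destruct (heap_step_main_new H T _ _ _ (normal_at t vt) (heap_step_at t vt) a hm') as [h | h];
    [exact (hmt h) |].
  exact (h (proj1 (Active_persist s t a hst (reached_of_valid t vt) ha))).
Qed.

Lemma main_T t : reached t -> main H T (St t) T.
Proof.
  revert t. apply reached_ind0.
  - destruct Hh as [(_ & hN & vH & vT & _) _]. rewrite <- hN.
    apply main_next; [apply main_H | congruence].
  - intros t vt hm.
    destruct (heap_step_main_keep H T _ _ _ (normal_at t vt) (heap_step_at t vt) T hm)
      as [h | (hk & hc & hadr)]; [exact h | exfalso].
    destruct (heap_step_rem1 H T _ _ _ (normal_at t vt) (heap_step_at t vt) hk hc)
      as (_ & _ & hv).
    rewrite hadr, (proj2 (normal_T H T _ (normal_at t vt))) in hv. discriminate.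
Qed.

Lemma main_persist s t a : s <= t -> reached t -> main H T (St s) a ->
  main H T (St t) a \/
  exists r, s <= r < t /\ ev_kind (e r) = KRem /\ ev_chi (e r) = Chi1 /\ ev_adr (e r) = a.
Proof.
  intros hst ht hm. revert t hst ht. apply reached_ind; [left; exact hm |].
  intros t hst vt [hmt | (r & hr & hrest)].
  - destruct (heap_step_main_keep H T _ _ _ (normal_at t vt) (heap_step_at t vt) a hmt)
      as [h | h]; [left; exact h | right; exists t; split; [lia | exact h]].
  - right. exists r. split; [lia | exact hrest].
Qed.

Lemma main_stays s t a : s <= t -> valid N s -> reached t -> main H T (St s) a ->
  ~ (exists r, s <= r < t /\ ev_kind (e r) = KRem /\ ev_chi (e r) = Chi1 /\ ev_adr (e r) = a) ->
  main H T (St t) a /\ Val (St t) a = Val (St s) a.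
Proof.
  intros hst vs ht hm hkeep. split.
  - destruct (main_persist s t a hst ht hm) as [h | h]; [exact h | contradiction].
  - apply (Active_persist s t a hst ht), (main_active H T _ (normal_at s vs) a hm).
Qed.

Lemma activation_exists t a : reached t -> Active (St t) a -> a <> H -> a <> T ->
  exists j, j < t /\ is_activation N e a j /\ Val (St t) a = Fin (ev_val (e j)).
Proof.
  intros ht. revert a. pattern t. revert t ht. apply reached_ind0.
  - intros a ha hH hT. destruct Hh as [(hinit & _) _]. apply hinit in ha. tauto.
  - intros t vt IH a ha hH hT.
    destruct (heap_step_Active_new H T _ _ _ (heap_step_at t vt) a ha)
      as [hat | (hk & hc & hadr)].
    + destruct (IH a hat hH hT) as (j & hj & hact & hv).
      exists j. split; [lia | split; [exact hact |]].
      rewrite (proj2 (heap_step_Active H T _ _ _ (heap_step_at t vt) a hat)). exact hv.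
    + exists t. split; [lia | split; [repeat split; assumption |]].
      destruct (heap_step_add0 H T _ _ _ (normal_at t vt) (heap_step_at t vt) hk hc)
        as (_ & _ & hv).
      rewrite hadr in hv. exact hv.
Qed.

Lemma activation_unique a j1 j2 :
  is_activation N e a j1 -> is_activation N e a j2 -> j1 = j2.
Proof.
  assert (no_later : forall i j, is_activation N e a i -> is_activation N e a j -> ~ i < j).
  { intros i j (vi & ki & ci & ai) (vj & kj & cj & aj) hij.
    destruct (heap_step_add0 H T _ _ _ (normal_at i vi) (heap_step_at i vi) ki ci)
      as (_ & hm & _).
    destruct (heap_step_add0 H T _ _ _ (normal_at j vj) (heap_step_at j vj) kj cj)
      as (hna & _).
    apply hna. rewrite aj, <- ai.
    apply (Active_persist (S i) j); [lia | exact (reached_of_valid j vj) |].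
    exact (main_active H T _ (normal_at (S i) (valid_le _ j hij vj)) _ hm). }
  intros h1 h2. destruct (Nat.lt_total j1 j2) as [l | [E | l]];
    [destruct (no_later _ _ h1 h2 l) | exact E | destruct (no_later _ _ h2 h1 l)].
Qed.

Lemma activation_spec a j : is_activation N e a j -> activation N e a = j.
Proof.
  intros h. apply (activation_unique a); [| exact h].
  apply (epsilon_spec (inhabits 0) (is_activation N e a)). exists j; exact h.
Qed.

Lemma activation_of_Val s a n : valid N s -> Active (St s) a -> Val (St s) a = Fin n ->
  is_activation N e a (activation N e a) /\ activation N e a < s /\
  ev_val (e (activation N e a)) = n.
Proof.
  intros vs ha hv. destruct (Fin_neq_H_T H T _ (normal_at s vs) a n hv) as [hH hT].
  destruct (activation_exists s a (reached_of_valid s vs) ha hH hT) as (j & hj & hact & hv').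
  rewrite (activation_spec a j hact). split; [exact hact | split; [exact hj | congruence]].
Qed.

Lemma contains_inv_at t q : reached t -> contains_inv H (St t) q.
Proof.
  revert t. apply reached_ind0.
  - destruct Hh as [(_ & _ & _ & _ & hpc) _]. unfold contains_inv. rewrite hpc.
    split; [| split; [| split]]; discriminate.
  - intros t vt. destruct (step_at t vt) as [p Hs]. exact (step_contains_inv H T p _ _ _ q Hs).
Qed.

Lemma curr_Active t q : valid N t -> traversing (PC (St t) q) -> Active (St t) (curr (St t) q).
Proof.
  intros vt. apply (contains_inv_curr_Active H T _ q (normal_at t vt)).
  exact (contains_inv_at t q (reached_of_valid t vt)).
Qed.

Definition main_link b t u : Prop :=
  exists s, b <= s <= t /\ main H T (St s) u /\ Next (St t) u = Next (St s) u.

Lemma main_link_step b t u : valid N t -> main_link b t u -> Active (St t) u ->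
  main_link b (S t) u.
Proof.
  intros vt (s & hs & hm & hN) hu.
  destruct (classic (u = T)) as [-> | huT].
  { exists (S t). split; [lia | split; [exact (main_T (S t) (reached_S t vt)) | reflexivity]]. }
  destruct (heap_step_Next H T _ _ _ (normal_at t vt) (heap_step_at t vt) u hu huT) as [h | h].
  - exists (S t). split; [lia | split; [exact h | reflexivity]].
  - exists s. split; [lia | split; [exact hm | congruence]].
Qed.

Lemma main_link_of_main b s t w : b <= s -> s <= t -> valid N s -> reached t ->
  main H T (St s) w -> main_link b t w.
Proof.
  intros hbs hst vs ht hm.
  assert (ha : Active (St s) w) by exact (main_active H T _ (normal_at s vs) w hm).
  revert t hst ht. apply reached_ind.
  - exists s. split; [lia | split; [exact hm | reflexivity]].
  - intros t hst vt hl. apply (main_link_step b t w vt hl).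
    exact (proj1 (Active_persist s t w hst (reached_of_valid t vt) ha)).
Qed.

Section Execution.
Variables b c : nat.
Hypothesis Hx : cnt_exec N e b c.
Let p := ev_proc (e b).
Let x := xv (St (S b)) p.

Lemma exec_valid t : t <= c -> valid N t.
Proof. pose proof Hx as (vc & _). intros htc. exact (valid_le t c htc vc). Qed.

Lemma exec_start : PC (St (S b)) p = PC32 /\ curr (St (S b)) p = H.
Proof.
  pose proof Hx as (_ & hbc & k31 & _).
  destruct (step_at b (exec_valid b (Nat.lt_le_incl _ _ hbc))) as [q Hs].
  pose proof Hs as (_ & hq & _). subst q.
  destruct (step_K31 H T _ _ _ _ Hs k31) as (h1 & h2 & _). auto.
Qed.

Lemma exec_step t : S b <= t < c -> traversing (PC (St t) p) ->
  traversing (PC (St (S t)) p) /\ xv (St (S t)) p = xv (St t) p /\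
  (curr (St (S t)) p = curr (St t) p \/
   (curr (St (S t)) p = Next (St t) (curr (St t) p) /\
    num_lt (Val (St t) (curr (St t) p)) (Fin (xv (St t) p)))).
Proof.
  intros ht hpc. pose proof Hx as (_ & _ & _ & _ & _ & hnot35).
  assert (vt : valid N t) by exact (exec_valid t (Nat.lt_le_incl _ _ (proj2 ht))).
  destruct (step_at t vt) as [q Hs].
  destruct (classic (q = p)) as [-> | hqp].
  - assert (hk : ev_kind (e t) <> K35) by (apply hnot35; [lia | exact (proj1 (proj2 Hs))]).
    destruct (step_traverse H T p _ _ _ Hs hpc hk) as (h1 & h2 & [h3 | (h3 & h4)]); [auto |].
    split; [exact h1 | split; [exact h2 | right; split; [exact h3 |]]].
    exact (proj2 (contains_inv_below H T _ p (normal_at t vt)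
                    (contains_inv_at t p (reached_of_valid t vt)) h4)).
  - destruct Hs as (_ & _ & Hoth & _). destruct (Hoth p (not_eq_sym hqp)) as (-> & -> & -> & _).
    auto.
Qed.

Lemma exec_traverse t : S b <= t <= c ->
  traversing (PC (St t) p) /\ xv (St t) p = x /\ main_link b t (curr (St t) p).
Proof.
  induction t as [| t IH]; intros ht; [lia |].
  destruct (Nat.eq_dec t b) as [-> | hne].
  - destruct exec_start as [h1 h2]. split; [left; exact h1 | split; [reflexivity |]].
    rewrite h2. exists (S b). split; [lia | split; [apply main_H | reflexivity]].
  - destruct IH as (h1 & h2 & hl); [lia |].
    assert (vt : valid N t) by exact (exec_valid t ltac:(lia)).
    destruct (exec_step t ltac:(lia) h1) as (k1 & k2 & [-> | (-> & k4)]);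
      (split; [exact k1 | split; [congruence |]]).
    + exact (main_link_step b t _ vt hl (curr_Active t p vt h1)).
    + destruct hl as (s & hs & hm & ->).
      apply (main_link_of_main b s (S t)); [lia | lia | exact (exec_valid s ltac:(lia)) |
                                           exact (reached_S t vt) |].
      apply main_next; [exact hm | exact (lt_Fin_neq_T H T _ (normal_at t vt) _ _ k4)].
Qed.

Lemma exec_return :
  ev_adr (e c) = curr (St c) p /\ ev_val (e c) = x /\
  num_le (Fin x) (Val (St c) (curr (St c) p)) /\
  ((Val (St c) (curr (St c) p) = Fin x /\ ev_chi (e c) = Chi1) \/
   (Val (St c) (curr (St c) p) <> Fin x /\ ev_chi (e c) = Chi0)).
Proof.
  pose proof Hx as (vc & hbc & _ & k35 & hpc & _).
  destruct (step_at c vc) as [q Hs].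
  assert (q = p) as -> by (pose proof Hs as (_ & hq & _); rewrite <- hq; exact hpc).
  destruct (exec_traverse c ltac:(lia)) as (_ & <- & _).
  destruct (step_K35 H T _ _ _ _ Hs k35) as (h35 & hadr & hv & hret).
  pose proof (contains_inv_at c p (reached_of_valid c vc)) as (_ & _ & _ & I35).
  exact (conj hadr (conj hv (conj (proj2 (I35 h35)) hret))).
Qed.

Lemma exec_curr_le a :
  (forall k, b <= k <= c -> main H T (St k) a /\ Val (St k) a = Fin x) ->
  forall t, S b <= t <= c -> num_le (Val (St t) (curr (St t) p)) (Fin x).
Proof.
  intros ha. induction t as [| t IH]; intros ht; [lia |].
  assert (vSt : valid N (S t)) by exact (exec_valid (S t) (proj2 ht)).
  destruct (Nat.eq_dec t b) as [-> | hne].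
  { rewrite (proj2 exec_start), (proj2 (normal_H H T _ (normal_at (S b) vSt))). left. exact I. }
  assert (vt : valid N t) by exact (exec_valid t ltac:(lia)).
  destruct (exec_traverse t ltac:(lia)) as (h1 & hx & (s & hs & hcu & hN)).
  destruct (exec_step t ltac:(lia) h1) as (_ & _ & [-> | (-> & hlt)]).
  - rewrite (proj2 (Active_persist t (S t) _ (Nat.le_succ_diag_r t) (reached_S t vt)
                      (curr_Active t p vt h1))).
    apply IH. lia.
  - set (cu := curr (St t) p) in *.
    assert (vs : valid N s) by exact (exec_valid s ltac:(lia)).
    pose proof (normal_at s vs) as HSs.
    destruct (ha s ltac:(lia)) as [has vas].
    assert (hcua : Active (St s) cu) by exact (main_active H T _ HSs cu hcu).
    assert (hcuT : cu <> T) by exact (lt_Fin_neq_T H T _ (normal_at t vt) _ _ hlt).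
    rewrite hN, (proj2 (Active_persist s (S t) _ ltac:(lia) (reached_S t vt)
                          (proj1 (normal_next H T _ HSs cu hcua hcuT)))).
    rewrite <- vas. apply (main_Next_le H T _ HSs); [exact hcu | exact has | exact hcuT |].
    rewrite vas, <- hx, <- (proj2 (Active_persist s t cu ltac:(lia) (reached_of_valid t vt) hcua)).
    exact hlt.
Qed.

End Execution.

Lemma op1_witness X : is_ev N e X -> Op e Chi1 X ->
  exists s, Begin X <= s <= End X /\ valid N s /\
    main H T (St s) (madr e X) /\ Val (St s) (madr e X) = Fin (mval e X).
Proof.
  intros hX [hk hc]. destruct X as [i | b c]; simpl in *.
  - exists i. split; [lia | split; [exact hX |]].
    destruct hk as [hk | [hk | []]].
    + destruct (step_at i hX) as [p Hs]. exact (step_add1 H T p _ _ _ Hs hk hc).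
    + destruct (heap_step_rem1 H T _ _ _ (normal_at i hX) (heap_step_at i hX) hk hc)
        as (h1 & _ & h3).
      auto.
  - pose proof hX as (vc & hbc & _).
    destruct (exec_return b c hX) as (hadr & hval & _ & [(hv & _) | (_ & hc0)]); [| congruence].
    destruct (exec_traverse b c hX c ltac:(lia)) as (_ & _ & (s & hs & hm & _)).
    assert (vs : valid N s) by exact (valid_le s c (proj2 hs) vc).
    exists s. split; [lia | split; [exact vs |]]. rewrite hadr, hval. split; [exact hm |].
    rewrite <- hv. symmetry. apply (Active_persist s c); [lia | exact (reached_of_valid c vc) |].
    exact (main_active H T _ (normal_at s vs) _ hm).
Qed.

Lemma axiom_A1_holds : axiom_A1 N e.
Proof.
  intros X hX hop. cbv zeta.
  destruct (op1_witness X hX hop) as (s & hs & vs & hm & hv).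
  destruct (activation_of_Val s _ _ vs (main_active H T _ (normal_at s vs) _ hm) hv)
    as (hact & hlt & hval).
  unfold gamma. pose proof hact as (vj & kj & cj & aj).
  split; [exact vj | split; [exact kj | split; [exact cj | split; [exact hval |]]]].
  split; [unfold mlt; simpl; lia |].
  intros ([r |] & hR & hrem & hc1 & hgR & hlt1 & hlt2); [| contradiction].
  unfold mlt, gamma in *; simpl in *. injection hgR as hgR.
  destruct (heap_step_rem1 H T _ _ _ (normal_at r hR) (heap_step_at r hR) hrem hc1)
    as (hmr & hoff & hvr).
  assert (hra : Active (St r) (ev_adr (e r))) by exact (main_active H T _ (normal_at r hR) _ hmr).
  destruct (activation_of_Val r _ _ hR hra hvr) as ((_ & _ & _ & ar) & _).
  assert (Ea : ev_adr (e r) = madr e X) by (rewrite hgR in ar; congruence).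
  rewrite <- Ea in hm.
  apply (offmain_persist (S r) s (ev_adr (e r)));
    [lia | exact (reached_of_valid s vs) | | exact hoff | exact hm].
  exact (proj1 (heap_step_Active H T _ _ _ (heap_step_at r hR) _ hra)).
Qed.

Lemma op0_not_present B a : is_ev N e B -> Op e Chi0 B ->
  (forall k, Begin B <= k <= End B -> main H T (St k) a /\ Val (St k) a = Fin (mval e B)) ->
  False.
Proof.
  intros hB [hop hc0] present. destruct B as [i | b c]; simpl in *.
  - destruct (step_at i hB) as [p Hs]. destruct (present i ltac:(lia)) as [hmi hvi].
    exact (step_miss H T p _ _ _ Hs ltac:(tauto) hc0 a hmi hvi).
  - pose proof hB as (_ & hbc & _).
    destruct (exec_return b c hB) as (_ & hv & hge & [(_ & hc1) | (hne & _)]); [congruence |].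
    apply hne, num_le_antisym; [| exact hge].
    apply (exec_curr_le b c hB a); [| lia].
    intros k hk. rewrite <- hv. apply present. exact hk.
Qed.

Lemma axiom_A2_holds : axiom_A2 N e.
Proof.
  intros B [j | ] hB hX hop hadd hcx hlt hval; simpl in *; [| contradiction].
  destruct (heap_step_add0 H T _ _ _ (normal_at j hX) (heap_step_at j hX) hadd hcx)
    as (_ & hmj & hvj).
  set (a := ev_adr (e j)) in *.
  assert (vE : valid N (End B)) by (destruct B; [exact hB | exact (proj1 hB)]).
  assert (hbE : Begin B <= End B)
    by (destruct B; simpl; [lia | pose proof hB as (_ & h & _); lia]).
  unfold mlt in hlt; simpl in hlt.
  destruct (classic (exists r, S j <= r < End B /\ ev_kind (e r) = KRem /\
                               ev_chi (e r) = Chi1 /\ ev_adr (e r) = a))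
    as [(r & hr & kr & cr & ar) | hkeep].
  - exists (MAct r). simpl. split; [exact (valid_le r (End B) ltac:(lia) vE) |].
    split; [exact kr | split; [exact cr | split; [| unfold mlt; simpl; lia]]].
    assert (hact : is_activation N e a j) by (repeat split; assumption).
    unfold gamma; simpl. rewrite ar, (activation_spec a j hact). reflexivity.
  - exfalso. apply (op0_not_present B a hB hop).
    intros k hk. rewrite <- hval, <- hvj.
    apply (main_stays (S j) k a); [lia | exact (valid_le (S j) (End B) ltac:(lia) vE) |
      exact (reached_of_valid k (valid_le k _ (proj2 hk) vE)) | exact hmj |].
    intros (r & hr & hrest). apply hkeep. exists r. split; [lia | exact hrest].
Qed.

End History.

Lemma axiom_A0_holds {A P : Type} (N : option nat) (e : nat -> Event A P) : axiom_A0 N e.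
Proof.
  split; [| split; [| split; [| split; [| split]]]].
  - intros [i | b c] _; simpl; repeat split; intros [h1 h2]; congruence.
  - intros [i | b c] _ h; simpl in *; [exact I | tauto].
  - intros [i | b c] _ h; simpl in *; tauto.
  - intros [i | b c] h; simpl in *; [auto |].
    pose proof h as (vc & hbc & _). split; [| exact vc].
    destruct N; simpl in *; lia.
  - intros [i | b c] h hc; simpl in *; [contradiction |]. exact (proj1 (proj2 h)).
  - intros i j _ _. unfold mlt; simpl. destruct (Nat.lt_total i j) as [l | [-> | l]]; auto.
Qed.

Theorem theorem4p9 (A P : Type) (H T : A) :
  H <> T ->
  (exists f : A -> nat, forall a b, f a = f b -> a = b) ->
  (exists g : nat -> A, forall m n, g m = g n -> m = n) ->
  forall (N : option nat) (S : nat -> State A P) (e : nat -> Event A P),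
    history H T N S e ->
    axiom_A0 N e /\ axiom_A1 N e /\ axiom_A2 N e.
Proof.
  intros _ _ _ N S e Hh.
  exact (conj (axiom_A0_holds N e)
           (conj (axiom_A1_holds H T N S e Hh) (axiom_A2_holds H T N S e Hh))).
Qed.
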